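(* Let $\mathcal G=\mathfrak g_1\oplus\mathfrak g_2$ and let $f\in C^p_{\mathsf{LTS}}(\mathcal G,\mathcal G)$, $g\in C^q_{\mathsf{LTS}}(\mathcal G,\mathcal G)$ be homogeneous with bidegrees $\|f\|=l_f|k_f$ and $\|g\|=l_g|k_g$. Then $\|[f,g]_{\mathsf{LTS}}\|=(l_f+l_g)|(k_f+k_g)$.
   Context: All vector spaces are over a field of characteristic $0$. Cochains: $C^p(\mathcal G,\mathcal G)=\mathrm{Hom}(\otimes^{2p+1}\mathcal G,\mathcal G)$, arguments $(\mathfrak X_1,\dots,\mathfrak X_p,x)$, $\mathfrak X_i=x_i\otimes y_i$; for $P\in C^p,Q\in C^q$, $(P\circ Q)(\mathfrak X_1,\dots,\mathfrak X_{p+q},x)=\sum_{k=1}^p(-1)^{(k-1)q}\sum_{\sigma\in\mathbb S(k-1,q)}(-1)^\sigma P(\mathfrak X_{\sigma(1)},\dots,\mathfrak X_{\sigma(k-1)},Q(\mathfrak X_{\sigma(k)},\dots,\mathfrak X_{\sigma(k+q-1)},x_{k+q})\otimes y_{k+q},\mathfrak X_{k+q+1},\dots,x)+\sum_{k=1}^p(-1)^{(k-1)q}\sum_{\sigma\in\mathbb S(k-1,q)}(-1)^\sigma P(\mathfrak X_{\sigma(1)},\dots,\mathfrak X_{\sigma(k-1)},x_{k+q}\otimes Q(\mathfrak X_{\sigma(k)},\dots,\mathfrak X_{\sigma(k+q-1)},y_{k+q}),\mathfrak X_{k+q+1},\dots,x)+\sum_{\sigma\in\mathbb S(p,q)}(-1)^\sigma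 P(\mathfrak X_{\sigma(1)},\dots,\mathfrak X_{\sigma(p)},Q(\mathfrak X_{\sigma(p+1)},\dots,\mathfrak X_{\sigma(p+q)},x))$ ($\mathbb S$ = shuffles), $[P,Q]=P\circ Q-(-1)^{pq}Q\circ P$; $C^p_{\mathsf{LTS}}$ is the subspace of $P$ with $P(\dots,x,x,y)=0$ and vanishing cyclic sum in the last three slots, with restricted bracket $[\cdot,\cdot]_{\mathsf{LTS}}$. Bidegree: $\mathfrak g^{a,b}\subset\otimes^{a+b}\mathcal G$ is the sum of all tensor products with exactly $a$ factors $\mathfrak g_1$ and $b$ factors $\mathfrak g_2$; $f\in C^p_{\mathsf{LTS}}$ has bidegree $l|k$ ($l+k=2p$) if $f(\mathfrak g^{l+1,k})\subset\mathfrak g_1$, $f(\mathfrak g^{l,k+1})\subset\mathfrak g_2$, and $f$ vanishes on all other $\mathfrak g^{a,b}$; homogeneous means having a bidegree. *)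

From HB Require Import structures.
From mathcomp Require Import all_boot all_order all_algebra.
Set Implicit Arguments. Unset Strict Implicit. Unset Printing Implicit Defensive.
Import Order.TTheory GRing.Theory Num.Theory.
Local Open Scope ring_scope.

(* The ambient space  G = g1 (+) g2  is modelled as the product  V1 * V2  of two
   K-vector spaces; g1 = {(v,0)}, g2 = {(0,w)}. *)
Section Cochains.
Variables (K : fieldType) (V1 V2 : lmodType K).
Local Notation G := (V1 * V2)%type.

Definition in_g1 (v : G) : Prop := v.2 = 0.
Definition in_g2 (v : G) : Prop := v.1 = 0.

(* A cochain: a function of the arguments (X_1,...,X_p, x), X_i = (x_i, y_i),
   given as a sequence of pairs and a last argument.  Only sequences of the
   right length are relevant. *)
Definition cochain := seq (G * G) -> G -> G.

Definition lin_slot (f : G -> G) := forall (a : K) (u v : G), f (a *: u + v) = a *: f u + f v.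

(* P is (2p+1)-multilinear, i.e. an element of Hom(⊗^{2p+1} G, G) = C^p *)
Definition multilinear (p : nat) (P : cochain) : Prop :=
  (forall s, size s = p -> lin_slot (P s)) /\
  (forall s x i, size s = p -> (i < p)%N ->
     lin_slot (fun u => P (set_nth (0,0) s i (u, (nth (0,0) s i).2)) x) /\
     lin_slot (fun u => P (set_nth (0,0) s i ((nth (0,0) s i).1, u)) x)).

Definition lts_cond (p : nat) (P : cochain) : Prop :=
  forall s x y z, (0 < p)%N -> size s = p.-1 ->
    P (rcons s (x, x)) y = 0 /\
    P (rcons s (x, y)) z + P (rcons s (y, z)) x + P (rcons s (z, x)) y = 0.

Definition is_LTS_cochain (p : nat) (P : cochain) : Prop :=
  multilinear p P /\ lts_cond p P.

(* Shuffles in S(a,b): bit masks of length a+b with a [true]s; the trues give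
   the positions sigma(1) < ... < sigma(a), the falses sigma(a+1) < ... . *)
Fixpoint masks (n : nat) : seq bitseq :=
  if n is n'.+1 then [seq b :: m | b <- [:: true; false], m <- masks n'] else [:: [::]].
Definition shuffles (a b : nat) : seq bitseq :=
  [seq m <- masks (a + b) | count id m == a].
(* number of inversions of the shuffle: for each true, the falses before it *)
Fixpoint shinv (m : bitseq) (nf : nat) : nat :=
  match m with
  | [::] => 0%N
  | true :: m' => (nf + shinv m' nf)%N
  | false :: m' => shinv m' nf.+1
  end.
Definition shsign (m : bitseq) : K := (-1) ^+ shinv m 0.

(* P ∘ Q for P in C^p, Q in C^q; k below is the paper's k-1 *)
Definition comp (p q : nat) (P Q : cochain) : cochain := fun s x =>
  \sum_(k < p) \sum_(m <- shuffles k q)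
     (((-1) ^+ (k * q) * shsign m) *:
       (let u := take (k + q) s in
        let X := nth (0,0) s (k + q) in
        let r := drop (k + q).+1 s in
        P (mask m u ++ (Q (mask (map negb m) u) X.1, X.2) :: r) x
      + P (mask m u ++ (X.1, Q (mask (map negb m) u) X.2) :: r) x))
  + \sum_(m <- shuffles p q) shsign m *: P (mask m s) (Q (mask (map negb m) s) x).

(* [P,Q] = P∘Q - (-1)^{pq} Q∘P ; on LTS cochains this is [.,.]_LTS *)
Definition bracket (p q : nat) (P Q : cochain) : cochain := fun s x =>
  comp p q P Q s x - (-1) ^+ (p * q) *: comp q p Q P s x.

(* homogeneity of an argument: colour true = g1, false = g2 *)
Definition hom_in (c : bool) (v : G) : Prop := if c then in_g1 v else in_g2 v.

Definition has_bidegree (p : nat) (P : cochain) (l k : int) : Prop :=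
  l + k = (2 * p)%:Z /\
  forall (s : seq (G * G)) (x : G) (cs : seq (bool * bool)) (cx : bool),
    size s = p -> size cs = p ->
    (forall i, (i < p)%N -> hom_in (nth (true,true) cs i).1 (nth (0,0) s i).1 /\
                           hom_in (nth (true,true) cs i).2 (nth (0,0) s i).2) ->
    hom_in cx x ->
    let a : int := ((\sum_(c <- cs) (c.1 + c.2)) + cx)%N in
    (a = l + 1 -> in_g1 (P s x)) /\
    (a = l -> in_g2 (P s x)) /\
    (a <> l + 1 -> a <> l -> P s x = 0).

End Cochains.

From Pilot Require Import Defs.
From HB Require Import structures.
From mathcomp Require Import all_boot all_order all_algebra.
From mathcomp Require Import zify.
Set Implicit Arguments. Unset Strict Implicit. Unset Printing Implicit Defensive.
Import Order.TTheory GRing.Theory Num.Theory.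
Local Open Scope ring_scope.

(* Call v in g1 (+) g2 homogeneous of degree d when v lies in g1 if d = 1, in
   g2 if d = 0, and v = 0 otherwise.  A cochain of bidegree l|k maps
   homogeneous arguments with a factors in g1 to a value of degree a - l.  Each
   term of f o g feeds a value of g, of degree a_g - l_g, into a single slot of
   f; since f vanishes when that slot is 0, the term has degree
   a - l_f - l_g whatever a_g is. *)

Section Homogeneous.
Variables (K : fieldType) (V1 V2 : lmodType K).
Local Notation G := (V1 * V2)%type.

Definition homog (d : int) (v : G) : Prop :=
  [/\ d = 1 -> in_g1 v, d = 0 -> in_g2 v & d <> 1 -> d <> 0 -> v = 0].

Lemma homog0 d : homog d 0.
Proof. by []. Qed.

Lemma homogD d u v : homog d u -> homog d v -> homog d (u + v).
Proof.
case=> u1 u2 u0 [v1 v2 v0]; split.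
- by move=> E; rewrite /in_g1 /= (u1 E) (v1 E) addr0.
- by move=> E; rewrite /in_g2 /= (u2 E) (v2 E) addr0.
- by move=> N1 N0; rewrite (u0 N1 N0) (v0 N1 N0) addr0.
Qed.

Lemma homogZ d a v : homog d v -> homog d (a *: v).
Proof.
case=> v1 v2 v0; split.
- by move=> E; rewrite /in_g1 /= (v1 E) scaler0.
- by move=> E; rewrite /in_g2 /= (v2 E) scaler0.
- by move=> N1 N0; rewrite (v0 N1 N0) scaler0.
Qed.

Lemma homogN d v : homog d v -> homog d (- v).
Proof. by rewrite -scaleN1r; apply: homogZ. Qed.

Lemma homog_sum d (I : eqType) (r : seq I) (F : I -> G) :
  (forall i, i \in r -> homog d (F i)) -> homog d (\sum_(i <- r) F i).
Proof. by move=> hF; rewrite big_seq; apply: big_ind => //; apply: homogD. Qed.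

Lemma homog_subP (a l : int) v :
  homog (a - l) v <->
  (a = l + 1 -> in_g1 v) /\ (a = l -> in_g2 v) /\ (a <> l + 1 -> a <> l -> v = 0).
Proof.
have E1 : a - l = 1 <-> a = l + 1 by split; lia.
have E0 : a - l = 0 <-> a = l by split; lia.
split=> [[v1 v2 v0] | [v1 [v2 v0]]].
- split; [by move/E1 | split; [by move/E0 |]].
  by move=> N1 N0; apply: v0; [move/E1 | move/E0].
- split; [by move/E1 | by move/E0 |].
  by move=> N1 N0; apply: v0; [move/E1 | move/E0].
Qed.

(* The zero value of [F] covers a zero argument of degree outside {0, 1}. *)
Lemma homog_subst (F : G -> G) (dF dv : int) v :
  F 0 = 0 -> homog dv v -> (forall c : bool, hom_in c v -> homog (dF + c) (F v)) ->
  homog (dF + dv) (F v).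
Proof.
move=> F0 [v1 v2 v0] hF.
have [E1|N1] := eqVneq dv 1; first by rewrite E1; exact: (hF true (v1 E1)).
have [E0|N0] := eqVneq dv 0; first by rewrite E0; exact: (hF false (v2 E0)).
by rewrite v0 ?F0; [exact: homog0 | exact/eqP | exact/eqP].
Qed.

End Homogeneous.

Section Colourings.
Variables (K : fieldType) (V1 V2 : lmodType K).
Local Notation G := (V1 * V2)%type.

Fixpoint coloured (cs : seq (bool * bool)) (s : seq (G * G)) : Prop :=
  match cs, s with
  | [::], [::] => True
  | c :: cs', X :: s' => [/\ hom_in c.1 X.1, hom_in c.2 X.2 & coloured cs' s']
  | _, _ => False
  end.

Lemma coloured_nthP cs s :
  coloured cs s <->
  size cs = size s /\
  forall i, (i < size s)%N -> hom_in (nth (true, true) cs i).1 (nth (0, 0) s i).1 /\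
                             hom_in (nth (true, true) cs i).2 (nth (0, 0) s i).2.
Proof.
elim: cs s => [|c cs IH] [|X s] //=; try by split=> -[].
split=> [[hX1 hX2 /IH[-> hs]] | [/succn_inj Es hs]].
  by split=> // -[|i] //= /hs.
have [hX1 hX2] := hs 0%N isT.
by split=> //; apply/IH; split=> // i /(hs i.+1).
Qed.

Lemma coloured_size cs s : coloured cs s -> size cs = size s.
Proof. by case/coloured_nthP. Qed.

Lemma coloured_cat c1 c2 s1 s2 :
  coloured c1 s1 -> coloured c2 s2 -> coloured (c1 ++ c2) (s1 ++ s2).
Proof. by elim: c1 s1 => [|c c1 IH] [|X s1] //= [hX1 hX2 /IH hcat] /hcat. Qed.

Lemma coloured_take n cs s : coloured cs s -> coloured (take n cs) (take n s).
Proof. by elim: cs s n => [|c cs IH] [|X s] [|n] //= [hX1 hX2 /IH]. Qed.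

Lemma coloured_drop n cs s : coloured cs s -> coloured (drop n cs) (drop n s).
Proof. by elim: cs s n => [|c cs IH] [|X s] [|n] //= [hX1 hX2 /IH]. Qed.

Lemma coloured_mask m cs s : coloured cs s -> coloured (mask m cs) (mask m s).
Proof.
by elim: cs s m => [|c cs IH] [|X s] [|[] m] //= [hX1 hX2 /(IH _ m)].
Qed.

Definition g1_count (cs : seq (bool * bool)) : nat := (\sum_(c <- cs) (c.1 + c.2))%N.

Lemma g1_count_cat c1 c2 : g1_count (c1 ++ c2) = (g1_count c1 + g1_count c2)%N.
Proof. exact: big_cat. Qed.

Lemma g1_count_cons c cs : g1_count (c :: cs) = (c.1 + c.2 + g1_count cs)%N.
Proof. exact: big_cons. Qed.

Lemma g1_count_mask m cs : size m = size cs ->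
  g1_count cs = (g1_count (mask m cs) + g1_count (mask (map negb m) cs))%N.
Proof.
rewrite /g1_count; elim: cs m => [|c cs IH] [|b m] //=; first by rewrite !big_nil.
by move=> /succn_inj/IH; case: b; rewrite /= !big_cons => ->; lia.
Qed.

Lemma g1_count_split n cs : (n < size cs)%N ->
  g1_count cs = (g1_count (take n cs) + ((nth (true, true) cs n).1 +
                 (nth (true, true) cs n).2) + g1_count (drop n.+1 cs))%N.
Proof.
move=> lt_n; rewrite -{1}(cat_take_drop n cs) (drop_nth (true, true) lt_n).
by rewrite g1_count_cat g1_count_cons addnA.
Qed.

End Colourings.

Section Bidegree.
Variables (K : fieldType) (V1 V2 : lmodType K).
Local Notation G := (V1 * V2)%type.
Implicit Types (P : cochain V1 V2) (s : seq (G * G)) (cs : seq (bool * bool)).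

Lemma lin_slot0 (F : G -> G) : lin_slot F -> F 0 = 0.
Proof.
move=> linF; have := linF 1 0 0; rewrite !scale1r addr0.
by move/(congr1 (fun v => - F 0 + v)); rewrite addNr addKr.
Qed.

Lemma multilinear_pair0 p P pre r y x : multilinear p P ->
  (size pre + (size r).+1 = p)%N ->
  P (pre ++ (0, y) :: r) x = 0 /\ P (pre ++ (y, 0) :: r) x = 0.
Proof.
move=> [_ linP] sz.
have szP : size (pre ++ (y, y) :: r) = p by rewrite size_cat.
have lt_p : (size pre < p)%N by rewrite -sz addnS ltnS leq_addr.
have [lin1 lin2] := linP _ x (size pre) szP lt_p.
have setE z : set_nth (0, 0) (pre ++ (y, y) :: r) (size pre) z = pre ++ z :: r.
  by elim: pre {sz szP lt_p lin1 lin2} => //= X pre ->.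
have nthE : nth (0, 0) (pre ++ (y, y) :: r) (size pre) = (y, y).
  by rewrite nth_cat ltnn subnn.
by move: (lin_slot0 lin1) (lin_slot0 lin2); rewrite !setE nthE.
Qed.

Definition homog_cochain p P (l : int) : Prop :=
  forall s x cs cx, size s = p -> coloured cs s -> hom_in cx x ->
    homog ((g1_count cs + cx)%N%:Z - l) (P s x).

Lemma has_bidegreeP p P l k :
  has_bidegree p P l k <-> l + k = (2 * p)%:Z /\ homog_cochain p P l.
Proof.
split=> -[deg homP]; split=> // s x cs cx.
- move=> sz /coloured_nthP[szc colc] hx; apply/homog_subP.
  by apply: homP => //; rewrite ?szc -?sz.
- move=> sz szc colc hx; apply/homog_subP.
  apply: homP => //; apply/coloured_nthP.
  by split=> [|i]; rewrite sz //; apply: colc.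
Qed.

End Bidegree.

Lemma size_masks n m : m \in masks n -> size m = n.
Proof.
elim: n m => [|n IH] m /=; first by rewrite inE => /eqP ->.
by rewrite !mem_cat in_nil orbF => /orP[] /mapP[m' /IH <- ->].
Qed.

Lemma size_shuffle a b m : m \in shuffles a b -> size m = (a + b)%N.
Proof. by rewrite mem_filter => /andP[_ /size_masks]. Qed.

Lemma size_mask_shuffle (T : Type) a b m (s : seq T) :
  m \in shuffles a b -> size s = (a + b)%N ->
  size (mask m s) = a /\ size (mask (map negb m) s) = b.
Proof.
move=> shm ss; have sm := size_shuffle shm.
move: shm; rewrite mem_filter => /andP[/eqP cm _].
rewrite !size_mask ?size_map ?sm ?ss // count_map.
have := count_predC id m; rewrite sm cm.
by split=> //; rewrite (eq_count (a2 := predC id)) //; lia.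
Qed.

Section Composition.
Variables (K : fieldType) (V1 V2 : lmodType K).
Variables (p q : nat) (P Q : cochain V1 V2) (lP lQ : int).
Hypotheses (P_multilinear : multilinear p P)
  (P_homog : homog_cochain p P lP) (Q_homog : homog_cochain q Q lQ).

Lemma homog_insert pre cpre r cr y cy x cx v dv d :
  (size pre + (size r).+1 = p)%N -> coloured cpre pre -> coloured cr r ->
  hom_in cy y -> hom_in cx x -> homog dv v ->
  d = (g1_count cpre + cy + g1_count cr + cx)%N%:Z - lP + dv ->
  homog d (P (pre ++ (v, y) :: r) x) /\ homog d (P (pre ++ (y, v) :: r) x).
Proof.
move=> sz cpre_pre cr_r hy hx hv ->.
have [zero1 zero2] := multilinear_pair0 y x P_multilinear sz.
have szP z : size (pre ++ z :: r) = p by rewrite size_cat.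
have homP c1 c2 z : hom_in c1 z.1 -> hom_in c2 z.2 ->
    homog ((g1_count cpre + (c1 + c2) + g1_count cr + cx)%N%:Z - lP)
          (P (pre ++ z :: r) x).
  move=> hz1 hz2.
  rewrite -(addnA (g1_count cpre)) -(g1_count_cons (c1, c2)) -g1_count_cat.
  by apply: P_homog => //; apply: coloured_cat.
split.
- apply: (homog_subst (F := fun u => P (pre ++ (u, y) :: r) x) (v := v)) => // c hc /=.
  by apply: (@eq_ind _ _ (fun d => homog d _) (homP c cy (v, y) hc hy)); lia.
- apply: (homog_subst (F := fun u => P (pre ++ (y, u) :: r) x) (v := v)) => // c hc /=.
  by apply: (@eq_ind _ _ (fun d => homog d _) (homP cy c (y, v) hy hc)); lia.
Qed.

Lemma homog_comp_insert k m U CU X CX r cr x cx :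
  m \in shuffles k q -> size U = (k + q)%N -> (k + (size r).+1 = p)%N ->
  coloured CU U -> hom_in CX.1 X.1 -> hom_in CX.2 X.2 -> coloured cr r ->
  hom_in cx x ->
  homog ((g1_count CU + (CX.1 + CX.2) + g1_count cr + cx)%N%:Z - (lP + lQ))
    (P (mask m U ++ (Q (mask (map negb m) U) X.1, X.2) :: r) x
   + P (mask m U ++ (X.1, Q (mask (map negb m) U) X.2) :: r) x).
Proof.
move=> shm szU szr colU hX1 hX2 colr hx.
have [szP szQ] := size_mask_shuffle shm szU.
set m' := map negb m.
have szins : (size (mask m U) + (size r).+1 = p)%N by rewrite szP.
have colP := coloured_mask m colU.
have hQ1 := @Q_homog _ X.1 (mask m' CU) CX.1 szQ (coloured_mask m' colU) hX1.
have hQ2 := @Q_homog _ X.2 (mask m' CU) CX.2 szQ (coloured_mask m' colU) hX2.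
have cntU : g1_count CU = (g1_count (mask m CU) + g1_count (mask m' CU))%N.
  by apply: g1_count_mask; rewrite (coloured_size colU) szU (size_shuffle shm).
rewrite cntU; apply: homogD.
- by apply: (proj1 (homog_insert szins colP colr hX2 hx hQ1 _)); lia.
- by apply: (proj2 (homog_insert szins colP colr hX1 hx hQ2 _)); lia.
Qed.

Lemma homog_comp : homog_cochain (p + q) (Defs.comp p q P Q) (lP + lQ).
Proof.
move=> s x cs cx szs colcs hx; rewrite /Defs.comp /=; apply: homogD.
- apply: homog_sum => k _; apply: homog_sum => m shm; apply: homogZ.
  have lt_s : (k + q < size s)%N by rewrite szs ltn_add2r.
  have lt_cs : (k + q < size cs)%N by rewrite (coloured_size colcs).
  case/coloured_nthP: (colcs) => _ /(_ _ lt_s)[hX1 hX2].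
  rewrite (g1_count_split lt_cs); apply: (homog_comp_insert (k := k)) => //.
  + by rewrite size_take lt_s.
  + by rewrite size_drop szs; lia.
  + exact: coloured_take.
  + exact: coloured_drop.
- apply: homog_sum => m shm; apply: homogZ.
  have [szP szQ] := size_mask_shuffle shm szs.
  set m' := map negb m.
  have cnt : g1_count cs = (g1_count (mask m cs) + g1_count (mask m' cs))%N.
    by apply: g1_count_mask; rewrite (coloured_size colcs) szs (size_shuffle shm).
  have hQ := Q_homog szQ (coloured_mask m' colcs) hx.
  pose dP : int := (g1_count (mask m cs))%:Z - lP.
  pose dQ : int := (g1_count (mask m' cs) + cx)%N%:Z - lQ.
  apply: (@eq_ind _ (dP + dQ) (fun d => homog d _)); last by rewrite /dP /dQ cnt; lia.
  apply: (homog_subst (F := P (mask m s))) hQ _ => [|c hc].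
  + exact: lin_slot0 (proj1 P_multilinear _ szP).
  + by rewrite addrAC -PoszD; apply: P_homog => //; apply: coloured_mask.
Qed.

End Composition.

Theorem lemma3p5 (K : fieldType) (V1 V2 : lmodType K)
  (char0 : [pchar K] =i pred0)
  (p q : nat) (f g : cochain V1 V2) (lf kf lg kg : int) :
  is_LTS_cochain p f -> is_LTS_cochain q g ->
  has_bidegree p f lf kf -> has_bidegree q g lg kg ->
  has_bidegree (p + q) (bracket p q f g) (lf + lg) (kf + kg).
Proof.
move=> [mlf _] [mlg _] /has_bidegreeP[degf homf] /has_bidegreeP[degg homg].
apply/has_bidegreeP; split.
  by rewrite addrACA degf degg -PoszD -mulnDr.
move=> s x cs cx szs colcs hx; rewrite /bracket.
have szs' : size s = (q + p)%N by rewrite addnC.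
have hfg := homog_comp mlf homf homg szs colcs hx.
have hgf := homog_comp mlg homg homf szs' colcs hx.
apply: homogD => //; apply: homogN; apply: homogZ.
by rewrite (addrC lf).
Qed.
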